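(* Let $n\ge 2$, let $2\le d_1\le\cdots\le d_n$, let $\delta\ge 2$, $s\in\{1,\dots,n\}$ with $r:=d_s-\delta+1\ge 1$, and let $d=\sum_{i=1}^k(d_i-1)+\ell$ with $0\le k<n$ and $0<\ell\le d_{k+1}-1$ (empty sums are $0$ and empty products are $1$). Write $\kappa=\dim_{\mathbb F_q}\mathcal D^{(\delta,s)}_{\mathcal X}(d)$. Then $$(d_{k+1}-\ell)\prod_{i=k+2}^n d_i=W^{(1)}(\mathcal C_{\mathcal X}(d))\le W^{(1)}(\mathcal D^{(\delta,s)}_{\mathcal X}(d))\le m-\kappa-\left(\left\lceil\frac{\kappa}{r}\right\rceil-1\right)(\delta-1)+1 .$$ Moreover, if either (i) $k+2\le n$ and $d_{k+2}\le d_s$, or (ii) $d_s\le d_{k+1}$ and $0\le d_s-(d_{k+1}-\ell)<r$, then $W^{(1)}(\mathcal D^{(\delta,s)}_{\mathcal X}(d))=W^{(1)}(\mathcal C_{\mathcal X}(d))=(d_{k+1}-\ell)\prod_{i=k+2}^n d_i$.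
   Context: Let $\mathbb F_q$ be a finite field, $K_1,\dots,K_n\subseteq\mathbb F_q$ with $d_i=|K_i|$, and $\mathcal X=K_1\times\cdots\times K_n=\{\boldsymbol\alpha_1,\dots,\boldsymbol\alpha_m\}$ (a fixed enumeration), $m=\prod_{i=1}^n d_i$. Let $\Psi:\mathbb F_q[X_1,\dots,X_n]\to\mathbb F_q^m$, $f\mapsto(f(\boldsymbol\alpha_1),\dots,f(\boldsymbol\alpha_m))$. For $d\ge 0$, $\mathbb F_q[X_1,\dots,X_n]_{\le d}$ is the space of polynomials of degree at most $d$ together with $0$. The affine cartesian code is $\mathcal C_{\mathcal X}(d)=\Psi(\mathbb F_q[X_1,\dots,X_n]_{\le d})$. For integers $\delta\ge 2$ and $s\in\{1,\dots,n\}$, $\mathcal P^{(\delta,s)}_d$ is the set of $f\in\mathbb F_q[X_1,\dots,X_n]_{\le d}$ with $\deg_{X_s}f<d_s-\delta+1$, together with $0$; the $(\delta,s)$-quasi affine cartesian code is $\mathcal D^{(\delta,s)}_{\mathcal X}(d)=\Psi(\mathcal P^{(\delta,s)}_d)$. $W^{(1)}(C)$ denotes the minimum Hamming distance (minimum weight of a nonzero codeword) of a linear code $C$; $\lceil x\rceil$ is the least integer $\ge x$. *)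

From HB Require Import structures.
From mathcomp Require Import all_boot all_algebra.
From mathcomp Require Import mpoly.
From Stdlib Require Import ClassicalEpsilon.

Set Implicit Arguments.
Unset Strict Implicit.
Unset Printing Implicit Defensive.
Import GRing.Theory.
Local Open Scope ring_scope.

Definition pb (P : Prop) : bool :=
  if excluded_middle_informative P then true else false.

Section AffineCartesian.
Variables (F : finFieldType) (n : nat) (K : 'I_n -> {set F}).

Definition Xset : {set {ffun 'I_n -> F}} := [set x : {ffun 'I_n -> F} | [forall i, x i \in K i]].

(* m = |X|; codewords live in F^m = 'rV[F]_m, with the fixed enumeration
   enum_val : 'I_m -> X of the grid. *)
Definition Psi (f : {mpoly F[n]}) : 'rV[F]_#|Xset| :=
  \row_(j < #|Xset|) f.@[fun i => (enum_val j : {ffun 'I_n -> F}) i].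

Definition wt (c : 'rV[F]_#|Xset|) : nat := #|[set j | c 0 j != 0]|.

Definition code (P : {mpoly F[n]} -> Prop) : {set 'rV[F]_#|Xset|} :=
  [set c | pb (exists f, P f /\ Psi f = c)].

(* Minimum Hamming distance = minimum weight of a nonzero codeword
   (default value m for the zero code, which never occurs here). *)
Definition W1 (C : {set 'rV[F]_#|Xset|}) : nat :=
  \big[minn/#|Xset|]_(c in C | c != 0) wt c.

Definition dimF (C : {set 'rV[F]_#|Xset|}) : nat := \dim <<enum C>>%VS.

(* Degree of f in the variable X_s (0 for f = 0). *)
Definition degX (s : 'I_n) (f : {mpoly F[n]}) : nat :=
  (\max_(mm <- msupp f) mm s)%N.

(* F_q[X]_{<= d}: total degree at most d, or f = 0. *)
Definition Pdeg (d : nat) (f : {mpoly F[n]}) : Prop := (msize f <= d.+1)%N.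

Definition Pquasi (delta : nat) (s : 'I_n) (d : nat) (f : {mpoly F[n]}) : Prop :=
  Pdeg d f /\ (degX s f < #|K s| - delta + 1)%N.

Definition CX (d : nat) := code (Pdeg d).
Definition DX (delta : nat) (s : 'I_n) (d : nat) := code (Pquasi delta s d).

End AffineCartesian.

From HB Require Import structures.
From mathcomp Require Import all_boot all_algebra.
From mathcomp Require Import mpoly.
From mathcomp Require Import perm zify ring.
From Stdlib Require Import ClassicalEpsilon.

Set Implicit Arguments.
Unset Strict Implicit.
Unset Printing Implicit Defensive.
Import GRing.Theory.

(* Write d = sum_{i<k} (d_i - 1) + l and w = (d_k - l) prod_{i>k} d_i
   (indices from 0).  The proof has three independent parts.

   1. W1(C_X(d)) >= w: a footprint-style count.  A polynomial function of
      degree <= D is described by the recursive certificate [lowdeg]; dividing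
      out the hyperplanes x_j = a on which it vanishes ([ld_roots]) and
      counting slice by slice gives at least [minwt] sizes D nonzeros on the
      grid ([minwt_le_cnt]), and [minwt_grid] evaluates this bound to w.
   2. Codewords of weight w: a product of linear forms vanishing on prescribed
      subsets of the K_i ([construct]) realises any weight prod_i nu_i; with
      the profile [nu] this gives weight w in C_X(d), hence W1(C_X(d)) = w, and
      under (i) or (ii) a suitable transposition of the profile keeps the
      X_s-degree below r, giving the equality for D^{(delta,s)}_X(d).
   3. The Singleton-like bound: every codeword of D, restricted to a line in
      direction s, lies in an r-dimensional space ([V_sub_line]); zeroing
      ceil(kappa/r) - 1 lines ([lines]) and then single coordinates
      ([singleton_bound]) yields a codeword of the required small weight. *)

Section Codes.
Local Open Scope ring_scope.
Variables (F : finFieldType) (n : nat) (K : 'I_n -> {set F}).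
Local Notation m := #|Xset K|.

Lemma pbE (P : Prop) : pb P = true <-> P.
Proof. by rewrite /pb; case: excluded_middle_informative. Qed.

Lemma in_code (P : {mpoly F[n]} -> Prop) c :
  (c \in code K P) <-> exists f, P f /\ Psi K f = c.
Proof. by rewrite inE; apply: pbE. Qed.

Lemma wt_le (c : 'rV[F]_m) : (wt c <= m)%N.
Proof. by rewrite /wt; apply: leq_trans (max_card _) _; rewrite card_ord. Qed.

Lemma wt0 : wt (0 : 'rV[F]_m) = 0%N.
Proof. by apply/eqP; rewrite cards_eq0; apply/eqP/setP=> j; rewrite !inE mxE eqxx. Qed.

(* A minimum over a sequence is below each of its terms (minn has no unit,
   so the generic bigop lemmas do not apply). *)
Lemma bigmin_le_seq (T : eqType) (r : seq T) (P : pred T) (G : T -> nat) x0 c :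
  c \in r -> P c -> (\big[minn/x0]_(i <- r | P i) G i <= G c)%N.
Proof.
elim: r => // a r IH; rewrite inE big_cons => /orP[/eqP<- -> | cr Pc].
  exact: geq_minl.
by case: (P a); rewrite ?geq_min IH ?orbT.
Qed.

Lemma W1_le (C : {set 'rV[F]_m}) c : c \in C -> c != 0 -> (W1 C <= wt c)%N.
Proof. by move=> cC c0; apply: bigmin_le_seq; rewrite ?mem_index_enum ?cC. Qed.

Lemma W1_ge (C : {set 'rV[F]_m}) w :
  (forall c, c \in C -> c != 0 -> (w <= wt c)%N) -> (w <= m)%N -> (w <= W1 C)%N.
Proof.
move=> H wm; rewrite /W1; elim/big_ind: _ => //.
  by move=> x y ? ?; rewrite leq_min; apply/andP.
by move=> c /andP[]; apply: H.
Qed.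

Lemma W1_le_m (C : {set 'rV[F]_m}) : (W1 C <= m)%N.
Proof.
rewrite /W1; elim/big_ind: _ => // [x y xm _ | c _]; last exact: wt_le.
by rewrite geq_min xm.
Qed.

Lemma W1_mono (C1 C2 : {set 'rV[F]_m}) : C1 \subset C2 -> (W1 C2 <= W1 C1)%N.
Proof.
move=> sub; apply: W1_ge (W1_le_m _) => c cC1 c0.
exact: W1_le (subsetP sub c cC1) c0.
Qed.

Lemma W1_attained (C : {set 'rV[F]_m}) c w :
  c \in C -> c != 0 -> wt c = w ->
  (forall c', c' \in C -> c' != 0 -> (w <= wt c')%N) -> W1 C = w.
Proof.
move=> cC c0 <- lb; apply/eqP; rewrite eqn_leq W1_le //=.
by apply: W1_ge => //; apply: wt_le.
Qed.

Lemma wt_Psi f : wt (Psi K f) = #|[set x in Xset K | f.@[x] != 0]|.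
Proof.
rewrite /wt -(card_imset _ enum_val_inj); apply: eq_card => x.
rewrite !inE; apply/imsetP/andP => [[j] | [xX fx]].
  by rewrite inE mxE => fj ->; split=> //; have := enum_valP j; rewrite inE.
have xX' : x \in Xset K by rewrite inE.
by exists (enum_rank_in xX' x); rewrite ?inE ?mxE enum_rankK_in.
Qed.

Lemma card_X : m = (\prod_i #|K i|)%N.
Proof.
have -> : Xset K = [set x | x \in family (fun i => [pred a | a \in K i])].
  by apply/setP=> x; rewrite !inE.
by rewrite cardsE card_family foldrE big_map big_enum.
Qed.

End Codes.

(* The footprint bound: for side lengths cs = [:: c_1; ...; c_t] (increasing)
   and a degree budget D, [minwt cs D] is the number of nonzeros of the extremal
   polynomial that spends degree c_1 - 1, c_2 - 1, ... on the successive
   variables; it is a lower bound for the number of nonzeros on the grid of any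
   nonzero function of degree <= D (lemma [minwt_le_cnt] below). *)
Fixpoint minwt (cs : seq nat) (D : nat) : nat :=
  if cs is c :: cs' then
    (if (c.-1 <= D)%N then minwt cs' (D - c.-1) else (c - D) * \prod_(y <- cs') y)%N
  else 1%N.

Lemma mul_shift_le u b c : (u <= b)%N -> (b <= c)%N -> (u * c <= b * (c - (b - u)))%N.
Proof. move=> ub bc; nia. Qed.

Lemma minwt_shift cs b D : (0 < b)%N -> all (fun y => b <= y)%N cs ->
  (minwt cs D <= b * minwt cs (D + b.-1))%N.
Proof.
elim: cs D => [|c cs IH] D b0 /=; first by rewrite muln1.
case/andP=> bc allb; case: ifP => h1.
  rewrite (leq_trans h1 (leq_addr _ _)) (_ : D + b.-1 - c.-1 = D - c.-1 + b.-1)%N; last by lia.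
  exact: IH.
case: ifP => h2; last first.
  rewrite mulnA leq_mul2r (_ : c - (D + b.-1) = (c - D) - b.-1)%N; last by lia.
  by apply/orP; right; nia.
case: cs IH allb => [|c' cs] IH allb /=; first by rewrite big_nil ?muln1; lia.
case/andP: allb => bc' allb.
rewrite (_ : (c'.-1 <= D + b.-1 - c.-1)%N = false); last by apply/negbTE; rewrite -ltnNge; lia.
rewrite big_cons mulnA [X in (_ <= X)%N]mulnA leq_mul2r; apply/orP; right.
rewrite (_ : D + b.-1 - c.-1 = b - (c - D))%N; last by lia.
apply: mul_shift_le; lia.
Qed.

(* Removing the first side c, when only b of its values survive. *)
Lemma minwt_step c cs b D : (0 < b)%N -> (b <= c)%N -> (c - b <= D)%N ->
  all (fun y => c <= y)%N cs -> (minwt (c :: cs) D <= b * minwt cs (D - (c - b)))%N.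
Proof.
move=> b0 bc cbD allc /=; case: ifP => h1.
  rewrite (_ : D - (c - b) = D - c.-1 + b.-1)%N; last by lia.
  by apply: minwt_shift => //; apply: sub_all allc => y; apply: leq_trans.
case: cs allc => [|c' cs] allc /=; first by rewrite big_nil muln1; lia.
case/andP: allc => cc' allc.
rewrite (_ : (c'.-1 <= D - (c - b))%N = false); last by apply/negbTE; rewrite -ltnNge; lia.
rewrite big_cons mulnA [X in (_ <= X)%N]mulnA leq_mul2r; apply/orP; right.
rewrite (_ : D - (c - b) = b - (c - D))%N; last by lia.
apply: mul_shift_le; lia.
Qed.

Lemma minwt0 cs : all (fun c => 2 <= c)%N cs -> minwt cs 0 = (\prod_(y <- cs) y)%N.
Proof.
elim: cs => [|c cs IH] /=; first by rewrite big_nil.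
case/andP=> c2 _; rewrite big_cons subn0.
by rewrite (_ : (c.-1 <= 0)%N = false) //; apply/negbTE; rewrite -ltnNge; lia.
Qed.

Lemma minwt_closed (h : nat -> nat) k : forall a len l,
  (forall i, (a <= i < a + len)%N -> (2 <= h i)%N) -> (k < len)%N -> (0 < l)%N ->
  (l <= h (a + k) - 1)%N ->
  minwt [seq h i | i <- iota a len] (\sum_(i <- iota a k) (h i - 1) + l)%N
  = ((h (a + k) - l) * \prod_(i <- iota (a + k).+1 (len - k.+1)) h i)%N.
Proof.
elim: k => [|k IH] a [|len] l h2 // kl l0 lh /=.
  rewrite big_nil add0n addn0 subSS subn0 in lh *.
  case: ifP => c1; last by rewrite big_map.
  have -> : l = (h a - 1)%N by lia.
  rewrite (_ : h a - 1 - (h a).-1 = 0)%N; last by lia.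
  rewrite minwt0 ?big_map; last first.
    by apply/allP=> y /mapP[i]; rewrite mem_iota => /andP[i1 i2] ->; apply: h2; lia.
  by rewrite (_ : h a - (h a - 1) = 1)%N ?mul1n //; have := h2 a; lia.
rewrite big_cons.
have -> : ((h a).-1 <= h a - 1 + \sum_(j <- iota a.+1 k) (h j - 1) + l)%N by lia.
rewrite (_ : h a - 1 + \sum_(j <- iota a.+1 k) (h j - 1) + l - (h a).-1
   = \sum_(j <- iota a.+1 k) (h j - 1) + l)%N; last by lia.
move: lh; rewrite (_ : (a + k.+1 = a.+1 + k)%N) => [lh|]; last by lia.
by rewrite IH // => i hi; apply: h2; lia.
Qed.

(* Instead of manipulating multivariate
   polynomials directly, the counting argument works with functions
   g : F^n -> F together with a recursive certificate [lowdeg J D g]: g is a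
   polynomial of degree <= D in the first variable j of J whose coefficient of
   x_j^e is again of low degree (<= D - e) in the remaining variables of J, and
   g ignores the variables outside J. *)
Section LowDegree.
Local Open Scope ring_scope.
Variables (F : finFieldType) (n : nat).
Local Notation point := {ffun 'I_n -> F}.

Definition upd (x : point) (j : 'I_n) (a : F) : point :=
  [ffun i => if i == j then a else x i].

Lemma upd_eq x j a : upd x j a j = a.
Proof. by rewrite ffunE eqxx. Qed.

Lemma upd_neq x j a i : i != j -> upd x j a i = x i.
Proof. by rewrite ffunE => /negPf ->. Qed.

Lemma upd_upd x j a b : upd (upd x j b) j a = upd x j a.
Proof. by apply/ffunP=> i; rewrite !ffunE; case: eqP. Qed.

Lemma upd_id x j : upd x j (x j) = x.
Proof. by apply/ffunP=> i; rewrite !ffunE; case: eqP => // ->. Qed.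

Fixpoint lowdeg (J : seq 'I_n) (D : nat) (g : point -> F) {struct J} : Prop :=
  match J with
  | [::] => forall x y, g x = g y
  | j :: J' => exists phi : nat -> point -> F,
      (forall e, (e <= D)%N -> lowdeg J' (D - e) (phi e)) /\
      forall x, g x = \sum_(e < D.+1) x j ^+ e * phi e x
  end.

Lemma ld_dep J D g : lowdeg J D g ->
  forall x y : point, (forall i, i \in J -> x i = y i) -> g x = g y.
Proof.
elim: J D g => [|j J IH] D g /=; first by move=> H x y _; apply: H.
case=> phi [Hphi Hg] x y Hxy; rewrite !Hg Hxy ?mem_head //.
apply: eq_bigr => e _; congr (_ * _); apply: (IH _ _ (Hphi e _)); first by rewrite -ltnS.
by move=> i iJ; apply: Hxy; rewrite inE iJ orbT.
Qed.

Lemma ld_ext J D g g' : lowdeg J D g -> (forall x, g x = g' x) -> lowdeg J D g'.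
Proof.
case: J => [|j J] /=; first by move=> H E x y; rewrite -!E.
by case=> phi [H1 H2] E; exists phi; split=> // x; rewrite -E.
Qed.

Lemma ld0 J D : lowdeg J D (fun _ => 0).
Proof.
elim: J D => [|j J IH] D //=.
by exists (fun _ _ => 0); split=> // x; rewrite big1 // => e _; apply: mulr0.
Qed.

Lemma ld_lin J D c g1 g2 : lowdeg J D g1 -> lowdeg J D g2 ->
  lowdeg J D (fun x => c * g1 x + g2 x).
Proof.
elim: J D g1 g2 => [|j J IH] D g1 g2 /=.
  by move=> H1 H2 x y; rewrite (H1 x y) (H2 x y).
case=> phi1 [P1 H1] [phi2 [P2 H2]].
exists (fun e x => c * phi1 e x + phi2 e x); split.
  by move=> e le; apply: IH; [apply: P1 | apply: P2].
move=> x; rewrite H1 H2 mulr_sumr -big_split /=; apply: eq_bigr => e _.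
by rewrite mulrDr mulrCA.
Qed.

Lemma ld_sum J D (I : Type) (r : seq I) (P : pred I) (c : I -> F) (G : I -> point -> F) :
  (forall i, P i -> lowdeg J D (G i)) ->
  lowdeg J D (fun x => \sum_(i <- r | P i) c i * G i x).
Proof.
move=> HG; elim: r => [|i r IH].
  by apply: ld_ext (ld0 J D) _ => x; rewrite big_nil.
case Pi: (P i); last by apply: ld_ext IH _ => x; rewrite big_cons Pi.
by apply: ld_ext (ld_lin (c i) (HG i Pi) IH) _ => x; rewrite big_cons Pi.
Qed.

Lemma ld_mono J D D' g : (D <= D')%N -> lowdeg J D g -> lowdeg J D' g.
Proof.
elim: J D D' g => [|j J IH] D D' g //= le [phi [Hphi Hg]].
exists (fun e => if (e <= D)%N then phi e else fun _ => 0); split.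
  move=> e le'; case: ifP => leD; last exact: ld0.
  by apply: (IH (D - e)%N); [apply: leq_sub2r | apply: Hphi].
move=> x; rewrite Hg (big_ord_widen D'.+1 (fun e : nat => x j ^+ e * phi e x)) //.
rewrite big_mkcond /=; apply: eq_bigr => i _.
by rewrite ltnS; case: ifP => _ //=; rewrite mulr0.
Qed.

Lemma ld_slice j J D g a : j \notin J -> lowdeg (j :: J) D g ->
  lowdeg J D (fun x => g (upd x j a)).
Proof.
move=> jJ [phi [Hphi Hg]].
apply: ld_ext (@ld_sum J D _ (index_enum 'I_D.+1) predT (fun e : 'I_D.+1 => a ^+ e)
     (fun e : 'I_D.+1 => phi e) _) _.
  by move=> e _; apply: (ld_mono (leq_subr e D)); apply: Hphi; rewrite -ltnS.
move=> x; rewrite Hg upd_eq; apply: eq_bigr => e _; congr (_ * _).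
apply: (ld_dep (Hphi e _)); first by rewrite -ltnS.
by move=> i iJ; rewrite upd_neq //; apply: contraNneq jJ => <-.
Qed.

Lemma geom_factor (t a : F) e :
  t ^+ e - a ^+ e = (t - a) * \sum_(i < e) t ^+ i * a ^+ (e - i.+1).
Proof.
elim: e => [|e IH]; first by rewrite big_ord0 !expr0 subrr mulr0.
rewrite big_ord_recl /= expr0 mul1r subn1 /=.
have -> : \sum_(i < e) t ^+ (lift ord0 i) * a ^+ (e.+1 - (lift ord0 i).+1)
        = t * \sum_(i < e) t ^+ i * a ^+ (e - i.+1).
  by rewrite mulr_sumr; apply: eq_bigr => i _; rewrite lift0 subSS exprS; ring.
have H : (t - a) * (t * \sum_(i < e) t ^+ i * a ^+ (e - i.+1)) = t * (t ^+ e - a ^+ e).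
  by rewrite IH; ring.
by rewrite mulrDr H !exprS; ring.
Qed.

Lemma ld_factor j J D g a : j \notin J -> lowdeg (j :: J) D.+1 g ->
  exists h, lowdeg (j :: J) D h /\
    forall x, g x - g (upd x j a) = (x j - a) * h x.
Proof.
move=> jJ [phi [Hphi Hg]].
pose psi i x := \sum_(e < D.+2 | (i < e)%N) a ^+ (e - i.+1) * phi e x.
exists (fun x : point => \sum_(i < D.+1) x j ^+ i * psi i x); split.
  exists psi; split=> // i le.
  apply: (@ld_sum J (D - i) _ (index_enum 'I_D.+2) (fun e : 'I_D.+2 => (i < e)%N)).
  move=> e lt; apply: (@ld_mono _ (D.+1 - e)%N); first by lia.
  by apply: Hphi; rewrite -ltnS.
move=> x.
have -> : g (upd x j a) = \sum_(e < D.+2) a ^+ e * phi e x.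
  rewrite Hg upd_eq; apply: eq_bigr => e _; congr (_ * _).
  apply: (ld_dep (Hphi e _)); first by rewrite -ltnS.
  by move=> i iJ; rewrite upd_neq //; apply: contraNneq jJ => <-.
rewrite Hg -sumrB; under eq_bigr do rewrite -mulrBl geom_factor -mulrA mulr_suml.
rewrite -mulr_sumr; congr (_ * _).
have -> : \sum_(e < D.+2) \sum_(i < e) x j ^+ i * a ^+ (e - i.+1) * phi e x
   = \sum_(e < D.+2) \sum_(i < D.+1)
       (if (i < e)%N then x j ^+ i * a ^+ (e - i.+1) * phi e x else 0).
  apply: eq_bigr => e _.
  rewrite (big_ord_widen D.+1 (fun i : nat => x j ^+ i * a ^+ (e - i.+1) * phi e x)).
    by rewrite big_mkcond.
  by rewrite -ltnS.
rewrite exchange_big /=; apply: eq_bigr => i _.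
rewrite /psi mulr_sumr [RHS]big_mkcond /=; apply: eq_bigr => e _.
by case: ifP => _; rewrite ?mulr0 // mulrA.
Qed.

Lemma ld_const j J g a : j \notin J -> lowdeg (j :: J) 0 g ->
  forall x, g x = g (upd x j a).
Proof.
move=> jJ [phi [Hphi Hg]] x; rewrite !Hg !big_ord1 !expr0 !mul1r.
apply: (ld_dep (Hphi 0%N _)) => // i iJ.
by rewrite upd_neq //; apply: contraNneq jJ => <-.
Qed.

Definition gridJ (K : 'I_n -> {set F}) (J : seq 'I_n) (x : point) :=
  forall i, i \in J -> x i \in K i.

Lemma ld_roots K j J (Z : seq F) : j \notin J -> uniq Z -> forall D g,
  lowdeg (j :: J) D g ->
  (forall a x, a \in Z -> gridJ K J x -> g (upd x j a) = 0) ->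
  (forall x, gridJ K J x -> g x = 0) \/
  ((size Z <= D)%N /\ exists h, lowdeg (j :: J) (D - size Z) h /\
     forall x, gridJ K J x -> g x = \prod_(a <- Z) (x j - a) * h x).
Proof.
move=> jJ; elim: Z => [|a0 Z IH] uZ D g Hld Hz.
  by right; split=> //; exists g; rewrite subn0; split=> // x _; rewrite big_nil mul1r.
move: uZ => /= /andP[a0Z uZ].
have Hz0 x : gridJ K J x -> g (upd x j a0) = 0 by apply: Hz; rewrite mem_head.
case: D Hld => [|D] Hld.
  by left=> x gx; rewrite (ld_const a0 jJ Hld) Hz0.
have [h1 [Hh1 Eh1]] := ld_factor a0 jJ Hld.
have {}Eh1 x : gridJ K J x -> g x = (x j - a0) * h1 x.
  by move=> gx; rewrite -Eh1 Hz0 ?subr0.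
have gridJ_upd x a : gridJ K J x -> gridJ K J (upd x j a).
  by move=> gx i iJ; rewrite upd_neq ?gx //; apply: contraNneq jJ => <-.
have Hz1 a x : a \in Z -> gridJ K J x -> h1 (upd x j a) = 0.
  move=> aZ gx; have aZ1 : a \in a0 :: Z by rewrite inE aZ orbT.
  have /eqP := Hz a x aZ1 gx; rewrite Eh1; last exact: gridJ_upd.
  rewrite upd_eq mulf_eq0 subr_eq0.
  by case/orP=> [/eqP aa0 | /eqP //]; rewrite -aa0 aZ in a0Z.
have [L|[sZ [h [Hh Eh]]]] := IH uZ _ _ Hh1 Hz1.
  by left=> x gx; rewrite Eh1 // L // mulr0.
right; split; first by rewrite /=; lia.
exists h; split; first by rewrite (_ : D.+1 - size (a0 :: Z) = D - size Z)%N.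
by move=> x gx; rewrite Eh1 // Eh // big_cons mulrA.
Qed.

Lemma ld_monom J (mm : 'X_{1..n}) : forall D, (\sum_(i <- J) mm i <= D)%N ->
  lowdeg J D (fun x : point => \prod_(i <- J) x i ^+ mm i).
Proof.
elim: J => [|j J IH] D /=; first by move=> _ x y; rewrite !big_nil.
rewrite big_cons => hD.
exists (fun e => if e == mm j then (fun x : point => \prod_(i <- J) x i ^+ mm i)
                 else (fun _ => 0)); split.
  by move=> e le; case: ifP => [/eqP-> | _]; [apply: IH; lia | apply: ld0].
move=> x; have lt : (mm j < D.+1)%N by lia.
rewrite big_cons (bigD1 (Ordinal lt)) //= eqxx [X in _ = _ + X]big1 ?addr0 //.
move=> e ne; case: ifP => [/eqP E|_]; last by rewrite mulr0.
by move: ne; rewrite -val_eqE /= E eqxx.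
Qed.

Lemma ld_poly (f : {mpoly F[n]}) D : (msize f <= D.+1)%N ->
  lowdeg (enum 'I_n) D (fun x => f.@[x]).
Proof.
move=> hs.
apply: ld_ext (@ld_sum _ D _ (msupp f) (fun mm => mm \in msupp f) (fun mm => f@_mm)
   (fun mm (x : point) => \prod_(i <- enum 'I_n) x i ^+ mm i) _) _.
  move=> mm mmf; apply: ld_monom; rewrite big_enum -mdegE.
  by have := leq_trans (msize_mdeg_lt mmf) hs; lia.
by move=> x; rewrite mevalE [RHS]big_seq; apply: eq_bigr => mm _; rewrite big_enum.
Qed.

End LowDegree.

Section Footprint.
Local Open Scope ring_scope.
Variables (F : finFieldType) (n : nat) (K : 'I_n -> {set F}).
Local Notation point := {ffun 'I_n -> F}.

Definition grid0 (J : seq 'I_n) (x : point) : bool :=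
  [forall i, if i \in J then x i \in K i else x i == 0].

Definition cnt (J : seq 'I_n) (g : point -> F) : nat :=
  #|[set x | grid0 J x & g x != 0]|.

Lemma grid0_gridJ J x : grid0 J x -> gridJ K J x.
Proof. by move=> /forallP gx i iJ; have := gx i; rewrite iJ. Qed.

Lemma grid0_upd0 j J x : j \notin J -> grid0 (j :: J) x -> grid0 J (upd x j 0).
Proof.
move=> jJ /forallP gx; apply/forallP=> i.
case: (eqVneq i j) => [->|ij]; first by rewrite (negPf jJ) upd_eq.
by rewrite upd_neq //; have := gx i; rewrite inE (negPf ij).
Qed.

Lemma grid0_rep j J D g a x : j \notin J -> lowdeg (j :: J) D g -> gridJ K J x ->
  exists2 x', grid0 J x' & g (upd x' j a) = g (upd x j a).
Proof.
move=> jJ Hld gx; exists [ffun i => if i \in J then x i else 0].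
  by apply/forallP=> i; rewrite ffunE; case iJ: (i \in J) => //; apply: gx.
apply: (ld_dep Hld) => i; rewrite inE => /orP[/eqP-> | iJ]; first by rewrite !upd_eq.
have ij : i != j by apply: contraNneq jJ => <-.
by rewrite !upd_neq // ffunE iJ.
Qed.

Lemma cnt_split j J g : j \notin J ->
  cnt (j :: J) g = (\sum_(a in K j) cnt J (fun x => g (upd x j a)))%N.
Proof.
move=> jJ; rewrite /cnt -sum1_card.
rewrite (partition_big (fun x : point => x j) (fun a => a \in K j)) /=; last first.
  by move=> x; rewrite inE => /andP[/forallP gx _]; have := gx j; rewrite mem_head.
apply: eq_bigr => a aK; rewrite sum1dep_card.
set B := [set x | grid0 J x & g (upd x j a) != 0].
have -> : [set x | (x \in [set x0 | grid0 (j :: J) x0 & g x0 != 0]) && (x j == a)]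
     = (fun y => upd y j a) @: B.
  apply/setP=> x; rewrite !inE; apply/idP/imsetP.
    case/andP=> /andP[gx gx0] /eqP xa; exists (upd x j 0).
      by rewrite inE grid0_upd0 // upd_upd -xa upd_id gx0.
    by rewrite upd_upd -xa upd_id.
  case=> y; rewrite inE => /andP[/forallP gy gy0] ->; rewrite gy0 upd_eq eqxx ?andbT.
  apply/forallP=> i /=; case: (eqVneq i j) => [->|ij]; first by rewrite mem_head upd_eq.
  by rewrite in_cons (negPf ij) /= upd_neq //; apply: gy.
rewrite card_in_imset // => y1 y2; rewrite !inE => /andP[/forallP g1 _] /andP[/forallP g2 _] E.
apply/ffunP=> i; case: (eqVneq i j) => [->|ij].
  by have := g1 j; have := g2 j; rewrite (negPf jJ) => /eqP -> /eqP ->.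
by rewrite -(upd_neq y1 a ij) E upd_neq.
Qed.

Lemma cnt_slices j J g (B : {set F}) G : j \notin J -> B \subset K j ->
  (forall a, a \in B -> G <= cnt J (fun x => g (upd x j a)))%N ->
  (#|B| * G <= cnt (j :: J) g)%N.
Proof.
move=> jJ BK HB; rewrite cnt_split // -sum_nat_const.
rewrite [X in (_ <= X)%N](big_setID B) /= (setIidPr BK).
by apply: leq_trans (leq_addr _ _); apply: leq_sum.
Qed.

Lemma minwt_le_cnt J : uniq J -> sorted leq [seq #|K j| | j <- J] -> forall D g,
  lowdeg J D g -> (exists x, grid0 J x && (g x != 0)) ->
  (minwt [seq #|K j| | j <- J] D <= cnt J g)%N.
Proof.
elim: J => [|j J IH] /=.
  by move=> _ _ D g _ [x xg]; apply/card_gt0P; exists x; rewrite inE.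
case/andP=> jJ uJ srt D g Hld [x0 /andP[gx0 gx0nz]].
pose B := [set a in K j | [exists x, grid0 J x && (g (upd x j a) != 0)]].
pose Z := enum (K j :\: B).
have BK : B \subset K j by apply/subsetP=> a; rewrite inE => /andP[].
have sizeZ : size Z = (#|K j| - #|B|)%N by rewrite /Z -cardE cardsD (setIidPr BK).
(* g vanishes on the slices outside B, hence is divisible by their product *)
have Hz a x : a \in Z -> gridJ K J x -> g (upd x j a) = 0.
  rewrite mem_enum !inE => /andP[naB aK] gx; apply/eqP; apply: contraNT naB => nz.
  have [x' gx' E] := grid0_rep a jJ Hld gx.
  by rewrite aK /=; apply/existsP; exists x'; rewrite gx' E.
have [L|[sZ [h [Hh Eh]]]] := ld_roots jJ (enum_uniq _) Hld Hz.
  move: gx0nz; rewrite L ?eqxx // => i iJ.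
  by apply: (grid0_gridJ gx0); rewrite inE iJ orbT.
have b0 : (0 < #|B|)%N.
  apply/card_gt0P; exists (x0 j); rewrite inE.
  have := forallP gx0 j; rewrite mem_head => -> /=.
  by apply/existsP; exists (upd x0 j 0); rewrite grid0_upd0 //= upd_upd upd_id.
(* each slice in B carries a nonzero function of degree D - size Z *)
have slice a : a \in B ->
    (minwt [seq #|K i| | i <- J] (D - size Z) <= cnt J (fun x => g (upd x j a)))%N.
  move=> aB; have pnz : \prod_(z <- Z) (a - z) != 0.
    rewrite prodf_seq_neq0; apply/allP=> z zZ /=; rewrite subr_eq0.
    by apply: contraTneq zZ => <-; rewrite mem_enum inE aB.
  have gh x : grid0 J x -> (g (upd x j a) != 0) = (h (upd x j a) != 0).
    move=> gx; rewrite Eh ?upd_eq ?mulf_eq0 ?negb_or ?pnz //.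
    by move=> i iJ; rewrite upd_neq ?(grid0_gridJ gx) //; apply: contraNneq jJ => <-.
  have -> : cnt J (fun x => g (upd x j a)) = cnt J (fun x => h (upd x j a)).
    by apply: eq_card => x; rewrite !inE; case gx: (grid0 J x); rewrite //= gh.
  apply: IH (path_sorted srt) _ _ (ld_slice a jJ Hh) _ => //.
  move: aB; rewrite inE => /andP[_ /existsP[x /andP[gx nz]]].
  by exists x; rewrite gx -gh.
apply: leq_trans (minwt_step b0 (subset_leq_card BK) _ (order_path_min leq_trans srt)) _.
  by rewrite -sizeZ.
by rewrite -sizeZ; apply: cnt_slices.
Qed.

End Footprint.

Section LowerBound.
Local Open Scope ring_scope.
Variables (F : finFieldType) (n : nat) (K : 'I_n -> {set F}).
Hypothesis K2 : forall i : 'I_n, (2 <= #|K i|)%N.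
Hypothesis mono : forall i j : 'I_n, (i <= j)%N -> (#|K i| <= #|K j|)%N.

(* The side lengths listed as a function on nat (its values beyond n are
   irrelevant), to match the iota-indexed closed form of [minwt]. *)
Let side (i : nat) : nat := if insub i is Some i' then #|K i'| else 0%N.

Let side_ord (i : 'I_n) : side i = #|K i|.
Proof. by rewrite /side valK. Qed.

Lemma sizes_sorted : sorted leq [seq #|K j| | j <- enum 'I_n].
Proof.
rewrite sorted_map; apply: (@sub_sorted _ (relpre val leq)); first by move=> i j; apply: mono.
by rewrite -sorted_map val_enum_ord iota_sorted.
Qed.

Lemma minwt_grid (k : 'I_n) l : (0 < l)%N -> (l <= #|K k| - 1)%N ->
  minwt [seq #|K j| | j <- enum 'I_n] (\sum_(i < n | (i < k)%N) (#|K i| - 1) + l)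
  = ((#|K k| - l) * \prod_(i < n | (k < i)%N) #|K i|)%N.
Proof.
move=> l0 lk.
have -> : [seq #|K j| | j <- enum 'I_n] = [seq side i | i <- iota 0 n].
  by rewrite -val_enum_ord -map_comp; apply: eq_map => i /=; rewrite side_ord.
have -> : (\sum_(i < n | (i < k)%N) (#|K i| - 1) = \sum_(i <- iota 0 k) (side i - 1))%N.
  rewrite -(eq_bigr _ (fun i _ => congr1 (subn^~ 1%N) (side_ord i))).
  rewrite -(big_mkord (fun i => i < k)%N (fun i => side i - 1)%N).
  by rewrite -(big_nat_widen 0 k n predT) ?(ltnW (ltn_ord k)) // /index_iota subn0.
have -> : (\prod_(i < n | (k < i)%N) #|K i| = \prod_(i <- iota k.+1 (n - k.+1)) side i)%N.
  rewrite -(eq_bigr _ (fun i _ => side_ord i)) -[RHS]/(\prod_(k.+1 <= i < n) side i)%N.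
  by rewrite big_geq_mkord.
have Ek : #|K k| = side (0 + k)%N by rewrite add0n side_ord.
rewrite Ek in lk *; apply: minwt_closed (ltn_ord k) l0 lk => i /andP[_].
by rewrite add0n => i_n; have := K2 (Ordinal i_n); rewrite -side_ord.
Qed.

Lemma wt_lower_bound (k : 'I_n) (l : nat) (f : {mpoly F[n]}) :
  (0 < l)%N -> (l <= #|K k| - 1)%N ->
  Pdeg (\sum_(i < n | (i < k)%N) (#|K i| - 1) + l) f -> Psi K f != 0 ->
  ((#|K k| - l) * \prod_(i < n | (k < i)%N) #|K i| <= wt (Psi K f))%N.
Proof.
move=> l0 lk hs nz; rewrite -minwt_grid // wt_Psi.
have -> : [set x in Xset K | f.@[x] != 0] = [set x | grid0 K (enum 'I_n) x & f.@[x] != 0].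
  apply/setP=> x; rewrite !inE; congr (_ && _); apply: eq_forallb => i.
  by rewrite mem_enum.
apply: minwt_le_cnt; [exact: enum_uniq | exact: sizes_sorted | exact: ld_poly |].
have [j nzj] : exists j, Psi K f 0 j != 0.
  apply/existsP; apply: contraNT nz => /existsPn H; apply/eqP/rowP=> j.
  by rewrite !mxE; apply/eqP; move: (H j); rewrite negbK mxE.
exists (enum_val j); apply/andP; split; last by move: nzj; rewrite mxE.
apply/forallP=> i; rewrite mem_enum /=.
by have := enum_valP j; rewrite inE => /forallP; apply.
Qed.

End LowerBound.

(* Codewords of prescribed weight: the product of the linear forms X_i - a
   over a set S_i of #|K i| - nu i values in each direction vanishes exactly off
   a subgrid of size prod_i nu i. *)
Section Construction.
Local Open Scope ring_scope.
Variables (F : finFieldType) (n : nat) (K : 'I_n -> {set F}) (s : 'I_n).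

Definition bnd (a b : nat) (p : {mpoly F[n]}) :=
  forall mm, mm \in msupp p -> (mdeg mm <= a)%N /\ (mm s <= b)%N.

Lemma bnd_mul a b a' b' p q : bnd a b p -> bnd a' b' q -> bnd (a + a') (b + b') (p * q).
Proof.
move=> hp hq mm /msuppM_le /allpairsP[[m1 m2] [/= m1p m2q ->]].
have [h1 h2] := hp _ m1p; have [h3 h4] := hq _ m2q.
by rewrite mdegD mnmDE; split; apply: leq_add.
Qed.

Lemma bnd_prod (I : Type) (r : seq I) (P : pred I) (G : I -> {mpoly F[n]})
  (A B : I -> nat) : (forall i, P i -> bnd (A i) (B i) (G i)) ->
  bnd (\sum_(i <- r | P i) A i) (\sum_(i <- r | P i) B i) (\prod_(i <- r | P i) G i).
Proof.
move=> H; elim: r => [|i r IH]; rewrite ?big_nil; last first.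
  by rewrite !big_cons; case Pi: (P i) => //; apply: bnd_mul (H i Pi) IH.
by move=> mm; rewrite msupp1 inE => /eqP->; rewrite mdeg0 mnm0E.
Qed.

Lemma bnd_lin i (a : F) : bnd 1 (i == s) ('X_i - a%:MP).
Proof.
move=> mm /msuppB_le; rewrite mem_cat msuppX inE msuppC => /orP[/eqP->|].
  by rewrite mdeg1 mnm1E.
by case: eqP => _ //; rewrite inE => /eqP->; rewrite mdeg0 mnm0E.
Qed.

Lemma bnd_msize a b p : bnd a b p -> (msize p <= a.+1)%N.
Proof.
move=> H; rewrite msizeE; apply/bigmax_leqP_seq => mm mmp _.
by have [] := H mm mmp.
Qed.

Lemma degX_leP b (p : {mpoly F[n]}) :
  reflect (forall mm, mm \in msupp p -> (mm s <= b)%N) (degX s p <= b)%N.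
Proof.
by apply: (iffP (bigmax_leqP_seq _ _ _ _)) => H mm mmp; [apply: H | move=> _; apply: H].
Qed.

Lemma construct (nu : 'I_n -> nat) : (forall i, nu i <= #|K i|)%N ->
  exists f : {mpoly F[n]}, [/\ (msize f <= (\sum_i (#|K i| - nu i)).+1)%N,
    (degX s f <= #|K s| - nu s)%N & wt (Psi K f) = (\prod_i nu i)%N].
Proof.
move=> nuK.
pose S i := [set x in take (#|K i| - nu i) (enum (K i))].
have cardS i : #|S i| = (#|K i| - nu i)%N.
  rewrite /S cardsE; apply/eqP; rewrite (card_uniqP _) ?take_uniq ?enum_uniq //.
  by rewrite size_take -cardE; case: ltnP => //; lia.
have SK i : S i \subset K i.
  by apply/subsetP=> x; rewrite inE => /mem_take; rewrite mem_enum.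
pose f := \prod_(i < n) \prod_(a in S i) ('X_i - a%:MP).
have Hb : bnd (\sum_i #|S i|) (\sum_i (#|S i| * (i == s))) f.
  apply: bnd_prod => i _.
  have -> : (#|S i| * (i == s) = \sum_(a in S i) (i == s : nat))%N.
    by rewrite sum_nat_const.
  rewrite -sum1_card.
  by apply: bnd_prod => a _; apply: bnd_lin.
have Hs : (\sum_i (#|S i| * (i == s)) = #|S s|)%N.
  by rewrite (bigD1 s) //= eqxx muln1 big1 ?addn0 // => i /negPf ->; apply: muln0.
exists f; split.
- by have := bnd_msize Hb; under eq_bigr do rewrite cardS.
- by apply/degX_leP => mm /Hb[_]; rewrite Hs cardS.
(* f vanishes at x iff some coordinate x_i lies in S_i *)
rewrite wt_Psi; have -> : [set x in Xset K | f.@[x] != 0]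
    = [set x | x \in family (fun i => [pred a | a \in K i :\: S i])].
  apply/setP=> x; rewrite !inE /f rmorph_prod /=; apply/andP/forallP.
    case=> /forallP xK /prodf_neq0 H i; rewrite inE /= inE xK andbT.
    apply/negP=> xS; have := H i isT; rewrite rmorph_prod /=.
    have xS' : x i \in S i by rewrite /S inE.
    by move/prodf_neq0/(_ (x i) xS'); rewrite rmorphB /= mevalXU mevalC subrr eqxx.
  move=> H; split; first by apply/forallP=> i; have := H i; rewrite inE /= inE => /andP[].
  apply/prodf_neq0 => i _; rewrite rmorph_prod /=; apply/prodf_neq0 => a aS.
  rewrite rmorphB /= mevalXU mevalC subr_eq0; apply: contraTneq (H i) => ->.
  by move: aS; rewrite !inE => ->.
rewrite cardsE card_family foldrE big_map big_enum /=; apply: eq_bigr => i _.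
by rewrite cardsD (setIidPr (SK i)) cardS; have := nuK i; lia.
Qed.

End Construction.

Section Singleton.
Local Open Scope ring_scope.
Variables (F : fieldType) (m : nat).

Definition ZT (T : {set 'I_m}) : {vspace 'rV[F]_m} :=
  <<[seq 'e_j | j <- enum (~: T)]>>%VS.

Lemma memZT (T : {set 'I_m}) (c : 'rV[F]_m) :
  reflect (forall j, j \in T -> c 0 j = 0) (c \in ZT T).
Proof.
apply: (iffP idP) => [cZ j jT | H].
  rewrite (coord_span (X := in_tuple [seq 'e_j0 | j0 <- enum (~: T)]) cZ).
  rewrite summxE big1 // => i _; rewrite mxE.
  have /mapP[j0] := mem_nth 0 (ltn_ord i); rewrite mem_enum inE => nj0 /= ->.
  by rewrite mxE eqxx /=; case: eqP => [E|]; [move: nj0; rewrite -E jT | rewrite mulr0].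
rewrite [c]row_sum_delta; apply: rpred_sum => j _.
case: (boolP (j \in T)) => jT; first by rewrite H // scale0r rpred0.
by apply/rpredZ/memv_span; apply: map_f; rewrite mem_enum inE.
Qed.

Lemma dim_cap (U Z E : {vspace 'rV[F]_m}) : (U <= Z + E)%VS ->
  (\dim U <= \dim (U :&: Z) + \dim E)%N.
Proof.
move=> sub; have := dimv_sum_cap U Z.
have : (\dim (U + Z) <= \dim (Z + E))%N by apply: dimvS; rewrite subv_add sub addvSl.
have [? _] := dimv_add_leqif Z E; lia.
Qed.

Definition wtv (c : 'rV[F]_m) : nat := #|[set j | c 0 j != 0]|.

Lemma nonzero_coord (c : 'rV[F]_m) : c != 0 -> exists j, c 0 j != 0.
Proof.
move=> c0; apply/existsP; apply: contraNT c0 => /existsPn H.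
by apply/eqP/rowP=> j; rewrite mxE; apply/eqP; move: (H j); rewrite negbK.
Qed.

Lemma dim_cap_coord (U : {vspace 'rV[F]_m}) j :
  (\dim U <= \dim (U :&: ZT [set j]) + 1)%N.
Proof.
have sub : (U <= ZT [set j] + <<[:: 'e_j]>>)%VS.
  apply/subvP=> v vU; rewrite -[v](subrK (v 0 j *: 'e_j)); apply: memv_add.
    by apply/memZT=> j'; rewrite inE => /eqP->; rewrite !mxE !eqxx mulr1 subrr.
  by apply/rpredZ/memv_span; rewrite mem_head.
apply: leq_trans (dim_cap sub) _; rewrite leq_add2l.
exact: (dim_span [:: ('e_j : 'rV[F]_m)]).
Qed.

Lemma singleton_bound a : forall (U : {vspace 'rV[F]_m}) (T : {set 'I_m}),
  (U <= ZT T)%VS -> (0 < a)%N -> (a <= \dim U)%N ->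
  exists c, [/\ c \in U, c != 0 & (wtv c + #|T| + a <= m + 1)%N].
Proof.
elim: a => // a IH U T UZ _ aU.
pose c := vpick U; have cU : c \in U by apply: memv_pick.
have c0 : c != 0 by rewrite vpick0 -dimv_eq0 -lt0n (leq_trans _ aU).
have cT j : j \in T -> c 0 j = 0 by apply/memZT/(subvP UZ).
have [j cj] := nonzero_coord c0.
have jT : j \notin T by apply: contra cj => /cT ->.
have wtc : (wtv c + #|T| <= m)%N.
  have : [set j | c 0 j != 0] \subset ~: T.
    by apply/subsetP=> i; rewrite !inE; apply: contra => /cT ->.
  move/subset_leq_card; have := cardsC T; rewrite card_ord /wtv.
  by move: #|[set _ | _]| #|~: T| #|T| => x y z; lia.
case: a IH aU => [|a] IH aU; first by exists c; split=> //; lia.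
pose U' := (U :&: ZT [set j])%VS.
have dimU' : (\dim U <= \dim U' + 1)%N := dim_cap_coord U j.
have U'Z : (U' <= ZT (j |: T))%VS.
  apply/subvP=> v; rewrite memv_cap => /andP[/(subvP UZ) /memZT vT /memZT vj].
  by apply/memZT=> i; rewrite in_setU1 => /orP[/eqP-> | /vT //]; apply: vj; rewrite inE.
have [|c' [c'U' c'0 hc']] := IH U' (j |: T) U'Z isT; first by lia.
exists c'; split=> //; first by move: c'U'; rewrite memv_cap => /andP[].
by move: hc'; rewrite cardsU1 jT; lia.
Qed.

End Singleton.

Arguments ZT {F m}.

(* The Singleton-like bound for D^{(delta,s)}_X(d): D is a linear code whose
   restriction to every line in direction s lies in a space of dimension
   r = #|K s| - delta + 1, while such a line has #|K s| = r + delta - 1 points. *)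
Section LocalRecovery.
Local Open Scope ring_scope.
Variables (F : finFieldType) (n : nat) (K : 'I_n -> {set F}).
Variables (delta : nat) (s : 'I_n) (d : nat).
Local Notation m := #|Xset K|.
Local Notation D := (DX K delta s d).
Local Notation r := (#|K s| - delta + 1)%N.
Local Notation V := (<<enum D>>%VS : {vspace 'rV[F]_m}).

Lemma Psi_lin a f g : Psi K (a *: f + g) = a *: Psi K f + Psi K g.
Proof. by apply/rowP=> j; rewrite !mxE mevalD mevalZ. Qed.

Lemma Pquasi_lin a f g : Pquasi K delta s d f -> Pquasi K delta s d g ->
  Pquasi K delta s d (a *: f + g).
Proof.
case=> [hf df] [hg dg]; split.
  rewrite /Pdeg; apply: leq_trans (msizeD_le _ _) _.
  by rewrite geq_max hg (leq_trans (msizeZ_le _ _)).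
have /degX_leP hf' : (degX s f <= #|K s| - delta)%N by lia.
have /degX_leP hg' : (degX s g <= #|K s| - delta)%N by lia.
suff : (degX s (a *: f + g) <= #|K s| - delta)%N by lia.
apply/degX_leP => mm /msuppD_le; rewrite mem_cat => /orP[/msuppZ_le | ]; [apply: hf' | apply: hg'].
Qed.

Lemma D_span c : c \in V -> c \in D.
Proof.
have D0 : 0 \in D.
  apply/in_code; exists 0; split; last by apply/rowP=> j; rewrite !mxE meval0.
  by split; [rewrite /Pdeg msize0 | rewrite /degX msupp0 big_nil; lia].
have D_lin a c1 c2 : c1 \in D -> c2 \in D -> a *: c1 + c2 \in D.
  move=> /in_code[f [Pf <-]] /in_code[g [Pg <-]]; apply/in_code.
  by exists (a *: f + g); split; [apply: Pquasi_lin | rewrite Psi_lin].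
move=> cV; rewrite (coord_span (X := in_tuple (enum D)) cV).
elim/big_ind: _ => // [x y xD yD | i _]; first by rewrite -[x]scale1r; apply: D_lin.
rewrite -[_ *: _]addr0; apply: D_lin D0.
by rewrite -mem_enum; apply/mem_nth/ltn_ord.
Qed.

Definition pt (j : 'I_m) : {ffun 'I_n -> F} := enum_val j.

Definition sameline (j j' : 'I_m) := [forall i, (i != s) ==> (pt j i == pt j' i)].

Lemma sameline_sym j j' : sameline j j' -> sameline j' j.
Proof.
move=> /forallP H; apply/forallP=> i; apply/implyP=> is_.
by rewrite eq_sym; apply: (implyP (H i)).
Qed.

Lemma sameline_trans j1 j2 j3 : sameline j1 j2 -> sameline j2 j3 -> sameline j1 j3.
Proof.
move=> /forallP H1 /forallP H2; apply/forallP=> i; apply/implyP=> is_.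
by rewrite (eqP (implyP (H1 i) is_)) (implyP (H2 i) is_).
Qed.

Lemma sameline_eq j j' i : sameline j j' -> i != s -> pt j' i = pt j i.
Proof. by move=> /forallP H is_; apply/esym/eqP; apply: (implyP (H i)). Qed.

Definition line (j : 'I_m) : {set 'I_m} := [set j' | sameline j j'].

Lemma card_line j : #|line j| = #|K s|.
Proof.
pose phi (j' : 'I_m) := pt j' s.
have inj : {in line j &, injective phi}.
  move=> j1 j2; rewrite !inE => s1 s2 E; apply: enum_val_inj.
  apply/ffunP=> i; case: (eqVneq i s) => [->|is_]; first exact: E.
  by rewrite -/(pt j1) -/(pt j2) (sameline_eq s1 is_) (sameline_eq s2 is_).
rewrite -(card_in_imset inj); suff -> : phi @: line j = K s by [].
apply/setP=> a; apply/imsetP/idP.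
  by case=> j' _ ->; have := enum_valP j'; rewrite inE => /forallP; apply.
move=> aK; have xX : upd (pt j) s a \in Xset K.
  rewrite inE; apply/forallP=> i; case: (eqVneq i s) => [->|is_]; first by rewrite upd_eq.
  by rewrite upd_neq //; have := enum_valP j; rewrite inE => /forallP; apply.
exists (enum_rank_in xX (upd (pt j) s a)); last by rewrite /phi /pt enum_rankK_in // upd_eq.
rewrite inE; apply/forallP=> i; apply/implyP=> is_.
by rewrite /pt enum_rankK_in // upd_neq.
Qed.

Definition ev (j : 'I_m) (t : nat) : 'rV[F]_m :=
  \row_j' (if sameline j j' then pt j' s ^+ t else 0).

(* Local recovery: up to a vector vanishing on the line of j, every codeword
   is a combination of the r vectors ev j t, t < r, since deg_{X_s} f < r. *)
Lemma V_sub_line j : (V <= ZT (line j) + <<[seq ev j t | t <- iota 0 r]>>)%VS.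
Proof.
apply/subvP=> c /D_span /in_code [f [[_ degf] <-]].
pose cL := \sum_(mm <- msupp f)
  (f@_mm * \prod_(i | i != s) pt j i ^+ mm i) *: ev j (mm s).
rewrite -[Psi K f](subrK cL); apply: memv_add.
  apply/memZT=> j'; rewrite inE => sl; rewrite !mxE summxE mevalE.
  apply/eqP; rewrite subr_eq0; apply/eqP; apply: eq_bigr => mm _.
  rewrite !mxE sl -mulrA; congr (_ * _).
  rewrite (bigD1 s) //= mulrC -/(pt j'); congr (_ * _); apply: eq_bigr => i is_.
  by rewrite -/(pt j') (sameline_eq sl is_).
rewrite /cL big_seq; apply: rpred_sum => mm mmf; apply/rpredZ/memv_span; apply: map_f.
by rewrite mem_iota add0n; have := degX_leP s (degX s f) f (leqnn _) mm mmf; lia.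
Qed.

Definition closedT (T : {set 'I_m}) := forall j j', j \in T -> sameline j j' -> j' \in T.

Lemma add_line (T : {set 'I_m}) : closedT T -> (0 < \dim (V :&: ZT T))%N ->
  exists T' : {set 'I_m}, [/\ closedT T', #|T'| = (#|T| + #|K s|)%N &
    (\dim (V :&: ZT T) <= \dim (V :&: ZT T') + r)%N].
Proof.
move=> clT dimU; pose c := vpick (V :&: ZT T).
have /andP[_ /memZT cT] : (c \in V) && (c \in ZT T) by rewrite -memv_cap memv_pick.
have [j cj] : exists j, c 0 j != 0 by apply/nonzero_coord; rewrite vpick0 -dimv_eq0 -lt0n.
have jT : j \notin T by apply: contra cj => /cT ->.
exists (T :|: line j); split.
- move=> j1 j2; rewrite !in_setU => /orP[j1T | ]; first by move/(clT _ _ j1T)->.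
  by rewrite !inE => s1 /(sameline_trans s1) ->; rewrite orbT.
- have dis : [disjoint T & line j].
    apply/pred0P=> j' /=; apply/negP=> /andP[j'T]; rewrite inE => sl.
    by move: jT; rewrite (clT _ _ j'T (sameline_sym sl)).
  by rewrite cardsU (disjoint_setI0 dis) cards0 subn0 card_line.
have sub := subv_trans (capvSl V (ZT T)) (V_sub_line j).
have ev_dim : (\dim <<[seq ev j t | t <- iota 0 r]>> <= r)%N.
  by apply: leq_trans (dim_span _) _; rewrite size_map size_iota.
apply: leq_trans (dim_cap sub) _; apply: leq_add ev_dim; apply: dimvS.
apply/subvP=> v; rewrite !memv_cap => /andP[/andP[vV /memZT vT] /memZT vL].
by rewrite vV /=; apply/memZT=> j'; rewrite in_setU => /orP[/vT | /vL].
Qed.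

Lemma lines t : (t * r < \dim V)%N -> exists T : {set 'I_m},
  #|T| = (t * #|K s|)%N /\ (\dim V <= \dim (V :&: ZT T) + t * r)%N.
Proof.
suff : (t * r < \dim V)%N -> exists T : {set 'I_m}, [/\ closedT T,
    #|T| = (t * #|K s|)%N & (\dim V <= \dim (V :&: ZT T) + t * r)%N].
  by move=> H /H[T [_ ? ?]]; exists T.
elim: t => [_|t IH ht].
  exists set0; split=> //; first by move=> j j'; rewrite in_set0.
    by rewrite cards0.
  rewrite addn0; apply: dimvS; rewrite subv_cap subvv; apply/subvP=> c _.
  by apply/memZT=> j; rewrite in_set0.
have [|T [clT cardT dimT]] := IH; first by apply: leq_ltn_trans ht; rewrite mulSn leq_addl.
have [|T' [clT' cardT' dimT']] := add_line clT; first by move: ht; rewrite mulSn; lia.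
by exists T'; split; rewrite // ?cardT' ?cardT ?mulSn; lia.
Qed.

Lemma lrc_bound : (2 <= delta)%N -> (delta <= #|K s|)%N ->
  ((W1 D)%:Z <= m%:Z - (dimF D)%:Z
     - (((dimF D + r - 1) %/ r)%N%:Z - 1) * (delta%:Z - 1) + 1)%R.
Proof.
move=> d2 dK; rewrite /dimF; set kap := \dim V.
have W1m := W1_le_m D.
case: (posnP kap) => [k0 | k0].
  by rewrite k0 add0n divn_small; [lia | rewrite addn1 subn1 /= ltnSn].
set q := ((kap + r - 1) %/ r)%N.
have qr : (q * r <= kap + r - 1)%N by apply: leq_divM.
have q1 : (0 < q)%N by rewrite divn_gt0; lia.
(* zero q - 1 lines, then apply Singleton's argument to what remains *)
have tr : (q.-1 * r < kap)%N by rewrite -(prednK q1) mulSn in qr; lia.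
have [T [cardT dimT]] := lines tr.
have pos : (0 < kap - q.-1 * r)%N by rewrite subn_gt0.
have dimU : (kap - q.-1 * r <= \dim (V :&: ZT T))%N by rewrite leq_subLR addnC.
have [c [cU c0 hc]] := singleton_bound (capvSr V (ZT T)) pos dimU.
have /W1_le /(_ c0) Wc : c \in D by apply: D_span; move: cU; rewrite memv_cap => /andP[].
have key : (W1 D + kap + q.-1 * (delta - 1) <= m + 1)%N.
  move: hc Wc; rewrite cardT (_ : #|K s| = r + (delta - 1))%N ?mulnDr; last by lia.
  rewrite -[wtv c]/(wt c); move: (q.-1 * r)%N (q.-1 * (delta - 1))%N tr => a b.
  lia.
rewrite -(prednK q1) -addn1 PoszD addrK; rewrite mulnBr muln1 in key.
lia.
Qed.

End LocalRecovery.

(* With the profile nu = (1, ..., 1, d_k - l,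
   d_{k+1}, ..., d_n), the construction of Section Construction gives a
   polynomial of degree d and weight w; permuting the profile changes only its
   X_s-degree, which is what membership in D^{(delta,s)}_X(d) constrains. *)
Section Profile.
Local Open Scope ring_scope.
Variables (F : finFieldType) (n : nat) (K : 'I_n -> {set F}) (k : 'I_n) (l : nat).
Hypothesis K2 : forall i : 'I_n, (2 <= #|K i|)%N.
Hypothesis lk : (l <= #|K k| - 1)%N.

Local Notation d := (\sum_(i < n | (i < k)%N) (#|K i| - 1) + l)%N.
Local Notation w := ((#|K k| - l) * \prod_(i < n | (k < i)%N) #|K i|)%N.

Definition nu (i : 'I_n) : nat :=
  if (i < k)%N then 1%N else if i == k then (#|K k| - l)%N else #|K i|.

Lemma nu_lt (i : 'I_n) : (i < k)%N -> nu i = 1%N.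
Proof. by rewrite /nu => ->. Qed.

Lemma nu_k : nu k = (#|K k| - l)%N.
Proof. by rewrite /nu ltnn eqxx. Qed.

Lemma nu_gt (i : 'I_n) : (k < i)%N -> nu i = #|K i|.
Proof.
move=> ki; rewrite /nu ifF; last by lia.
by rewrite ifF //; apply/negbTE; rewrite -val_eqE /=; lia.
Qed.

Lemma nu_le (i : 'I_n) : (nu i <= #|K i|)%N.
Proof.
case: (ltngtP i k) => [ik | ki | /val_inj ->]; last by rewrite nu_k leq_subr.
  by rewrite nu_lt //; have := K2 i; lia.
by rewrite nu_gt.
Qed.

Lemma sum_nu : (\sum_i (#|K i| - nu i) = d)%N.
Proof.
rewrite (bigID (fun i : 'I_n => (i < k)%N)) /=; congr (_ + _).
  by apply: eq_bigr => i /nu_lt ->.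
rewrite (bigD1 k) /=; last by rewrite ltnn.
rewrite nu_k subKn ?big1 ?addn0; [by [] | | by apply: leq_trans lk (leq_subr _ _)].
move=> i /andP[ik ink]; rewrite nu_gt ?subnn //.
by move: ik ink; rewrite -ltnNge -val_eqE /=; lia.
Qed.

Lemma prod_nu : (\prod_i nu i = w)%N.
Proof.
rewrite (bigID (fun i : 'I_n => (i < k)%N)) /= big1 ?mul1n; last by move=> i /nu_lt.
rewrite (bigD1 k) /=; last by rewrite ltnn.
rewrite nu_k; congr (_ * _); apply: eq_big => [i | i /andP[ik ink]]; last first.
  by rewrite nu_gt //; move: ik ink; rewrite -ltnNge -val_eqE /=; lia.
by apply/idP/idP => [/andP[] | ki]; rewrite -val_eqE /=; lia.
Qed.

Lemma profile_codeword (s : 'I_n) (tau : {perm 'I_n}) :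
  (forall i, nu (tau i) <= #|K i|)%N ->
  exists f : {mpoly F[n]},
    [/\ Pdeg d f, (degX s f <= #|K s| - nu (tau s))%N & wt (Psi K f) = w].
Proof.
move=> le; have [f [hs hd hw]] := construct s le.
exists f; split=> //.
  rewrite /Pdeg -sum_nu; apply: leq_trans hs _.
  rewrite sumnB // sumnB; last by move=> i _; apply: nu_le.
  by rewrite [X in (_ < (_ - X).+1)%N](reindex_inj (@perm_inj _ tau)).
by rewrite hw -prod_nu [RHS](reindex_inj (@perm_inj _ tau)).
Qed.

Lemma tperm_le a b : (nu b <= #|K a|)%N -> (nu a <= #|K b|)%N ->
  forall i, (nu (tperm a b i) <= #|K i|)%N.
Proof. by move=> h1 h2 i; case: tpermP => [->|->|_ _] //; apply: nu_le. Qed.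

Lemma good_perm (delta : nat) (s : 'I_n) :
  (forall i j : 'I_n, (i <= j)%N -> #|K i| <= #|K j|)%N ->
  ((exists j : 'I_n, (j = k.+1 :> nat) /\ (#|K j| <= #|K s|)%N)
   \/ ((#|K s| <= #|K k|)%N /\ (#|K k| - l <= #|K s|)%N
       /\ (#|K s| - (#|K k| - l) < #|K s| - delta + 1)%N)) ->
  exists tau : {perm 'I_n}, (forall i, nu (tau i) <= #|K i|)%N /\
    (#|K s| - nu (tau s) < #|K s| - delta + 1)%N.
Proof.
move=> mono H; have nu1 i : (nu ((1%g : {perm 'I_n}) i) <= #|K i|)%N.
  by rewrite perm1 nu_le.
have small_at_s (j : 'I_n) : (k < j)%N -> (s <= j)%N -> (#|K j| <= #|K s|)%N ->
    (#|K s| - nu j < #|K s| - delta + 1)%N.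
  by move=> kj /mono sj js; rewrite nu_gt //; lia.
case: (ltngtP k s) => [ks | sk | /val_inj ks].
- by exists 1%g; split=> //; rewrite perm1 (small_at_s s).
- case: H => [[j [jk js]] | [_ [h2 h3]]].
    have kj : (k < j)%N by rewrite jk.
    exists (tperm s j); rewrite tpermL (small_at_s j) //; last by lia.
    split=> //.
    apply: tperm_le; first by rewrite nu_gt.
    by rewrite nu_lt //; have := K2 j; lia.
  exists (tperm s k); rewrite tpermL nu_k; split=> //.
  by apply: tperm_le; rewrite ?nu_k ?nu_lt //; have := K2 k; lia.
- subst s; case: H => [[j [jk js]] | [_ [h2 h3]]]; last first.
    by exists 1%g; rewrite perm1 nu_k.
  have kj : (k < j)%N by rewrite jk.
  exists (tperm k j); rewrite tpermL (small_at_s j) ?(ltnW kj) //; split=> //.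
  apply: tperm_le; first by rewrite nu_gt.
  by rewrite nu_k; apply: leq_trans (leq_subr _ _) _; apply/mono/ltnW.
Qed.

End Profile.

Section MinimumDistance.
Local Open Scope ring_scope.
Variables (F : finFieldType) (n : nat) (K : 'I_n -> {set F}) (k : 'I_n) (l : nat).
Hypothesis K2 : forall i : 'I_n, (2 <= #|K i|)%N.
Hypothesis mono : forall i j : 'I_n, (i <= j)%N -> (#|K i| <= #|K j|)%N.
Hypothesis l0 : (0 < l)%N.
Hypothesis lk : (l <= #|K k| - 1)%N.

Local Notation d := (\sum_(i < n | (i < k)%N) (#|K i| - 1) + l)%N.
Local Notation w := ((#|K k| - l) * \prod_(i < n | (k < i)%N) #|K i|)%N.

Lemma DX_sub_CX delta s : DX K delta s d \subset CX K d.
Proof. by apply/subsetP=> c /in_code[f [[Pf _] <-]]; apply/in_code; exists f. Qed.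

Lemma w_gt0 : (0 < w)%N.
Proof.
rewrite muln_gt0 prodn_cond_gt0 ?andbT; first by lia.
by move=> i _; have := K2 i; lia.
Qed.

Lemma wt_w_neq0 (c : 'rV[F]_#|Xset K|) : wt c = w -> c != 0.
Proof. by move=> wc; apply: contraTneq w_gt0 => c0; rewrite -wc c0 wt0. Qed.

Lemma W1_CX : W1 (CX K d) = w.
Proof.
have le1 i : (nu K k l ((1%g : {perm 'I_n}) i) <= #|K i|)%N by rewrite perm1 nu_le.
have [f [Pf _ wf]] := profile_codeword K2 lk k le1.
apply: W1_attained (wt_w_neq0 wf) wf _; first by apply/in_code; exists f.
by move=> c /in_code[g [Pg <-]] g0; apply: wt_lower_bound.
Qed.

Lemma W1_DX delta s :
  ((exists j : 'I_n, (j = k.+1 :> nat) /\ (#|K j| <= #|K s|)%N)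
   \/ ((#|K s| <= #|K k|)%N /\ (#|K k| - l <= #|K s|)%N
       /\ (#|K s| - (#|K k| - l) < #|K s| - delta + 1)%N)) ->
  W1 (DX K delta s d) = w.
Proof.
move=> H; have [tau [le hr]] := good_perm K2 lk mono H.
have [f [Pf hd wf]] := profile_codeword K2 lk s le.
apply: W1_attained (wt_w_neq0 wf) wf _.
  by apply/in_code; exists f; do 2?split=> //; apply: leq_ltn_trans hd hr.
move=> c /(subsetP (DX_sub_CX delta s)) /in_code[g [Pg <-]] g0.
exact: wt_lower_bound.
Qed.

End MinimumDistance.

Theorem mainTheorem5 (F : finFieldType) (n : nat) (K : 'I_n -> {set F})
  (delta : nat) (s : 'I_n) (k : 'I_n) (l : nat) :
  (2 <= n)%N ->
  (forall i : 'I_n, 2 <= #|K i|)%N ->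
  (forall i j : 'I_n, (i <= j)%N -> #|K i| <= #|K j|)%N ->
  (2 <= delta)%N ->
  (delta <= #|K s|)%N ->
  (0 < l)%N -> (l <= #|K k| - 1)%N ->
  let d := ((\sum_(i < n | (i < k)%N) (#|K i| - 1)) + l)%N in
  let m := (\prod_(i < n) #|K i|)%N in
  let r := (#|K s| - delta + 1)%N in
  let kappa := dimF (DX K delta s d) in
  let w := ((#|K k| - l) * \prod_(i < n | (k < i)%N) #|K i|)%N in
  [/\ W1 (CX K d) = w,
      (W1 (CX K d) <= W1 (DX K delta s d))%N,
      ((W1 (DX K delta s d))%:Z <=
         m%:Z - kappa%:Z
         - (((kappa + r - 1) %/ r)%N%:Z - 1) * (delta%:Z - 1) + 1)%R
    & ((exists j : 'I_n, (j = k.+1 :> nat) /\ (#|K j| <= #|K s|)%N)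
       \/ ((#|K s| <= #|K k|)%N /\ (#|K k| - l <= #|K s|)%N
           /\ (#|K s| - (#|K k| - l) < r)%N)) ->
      W1 (DX K delta s d) = W1 (CX K d) /\ W1 (CX K d) = w].
Proof.
move=> _ K2 mono d2 dK l0 lk d m r kappa w.
have W1C : W1 (CX K d) = w by apply: W1_CX.
split=> //.
- by apply: W1_mono; apply: DX_sub_CX.
- by rewrite /m -card_X; apply: lrc_bound.
- by move=> H; rewrite W1C; split=> //; apply: W1_DX.
Qed.
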